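(* Let ${\cal C}$ be a semi-degenerate congruence-modular variety and $A\in{\cal C}$ a semiprime algebra. For any nonzero cardinal $\kappa$, the condition $(1)_{\kappa,{\rm Con}(A)}$ holds iff the condition $(1)_{\kappa,{\rm Con}(A)/\equiv_A}$ holds.
   Context: ${\cal C}$ semi-degenerate: no nontrivial member has a one-element subalgebra. ${\rm Con}(A)$: congruence lattice of $A$ with bounds $\Delta_A,\nabla_A=A^2$; $[\cdot,\cdot]_A$: the modular commutator. A congruence $\phi\ne\nabla_A$ is prime if $[\theta,\zeta]_A\subseteq\phi$ implies $\theta\subseteq\phi$ or $\zeta\subseteq\phi$. $\rho_A(\theta)$: intersection of all prime congruences containing $\theta$. $A$ semiprime: $\rho_A(\Delta_A)=\Delta_A$. $\theta\equiv_A\zeta$ iff $\rho_A(\theta)=\rho_A(\zeta)$; $\equiv_A$ is a congruence of the lattice ${\rm Con}(A)$ and ${\rm Con}(A)/\equiv_A$ is the quotient bounded lattice. For a bounded lattice $L$: ${\rm Ann}_L(U)=\{x\in L\mid x\wedge u=0\ \forall u\in U\}$, $(e]_L=\{x\mid x\le e\}$, ${\cal B}(L)$ the set of complemented elements; $(1)_{\kappa,L}$: for each $U\subseteq L$ with $|U|\le\kappa$ there is $e\in{\cal B}(L)$ with ${\rm Ann}_L(U)=(e]_L$. *)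

From Stdlib Require Import FunctionalExtensionality.
From mathcomp Require Import all_boot.

Set Implicit Arguments.
Unset Strict Implicit.
Unset Printing Implicit Defensive.

Record signature := Signature { sym :> Type; arity : sym -> nat }.

Record algebra (S : signature) := Algebra {
  carrier :> Type;
  interp : forall f : S, ('I_(arity f) -> carrier) -> carrier }.
Arguments interp {S} a f _ : rename.

Inductive term (S : signature) (X : Type) : Type :=
  | Var : X -> term S X
  | App : forall f : S, ('I_(arity f) -> term S X) -> term S X.
Arguments Var {S X}.
Arguments App {S X}.

Fixpoint eval (S : signature) (A : algebra S) (X : Type) (v : X -> A)
    (t : term S X) : A :=
  match t with
  | Var x => v x
  | App f ts => interp A f (fun i => @eval S A X v (ts i))
  end.
Arguments eval {S} A {X} v t.

Definition subrel (T : Type) (r s : T -> T -> Prop) := forall x y, r x y -> s x y.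
Definition releq (T : Type) (r s : T -> T -> Prop) := subrel r s /\ subrel s r.

Definition is_congruence (S : signature) (A : algebra S) (r : A -> A -> Prop) :=
  [/\ (forall x, r x x),
      (forall x y, r x y -> r y x),
      (forall x y z, r x y -> r y z -> r x z) &
      (forall f (a b : 'I_(arity f) -> A),
          (forall i, r (a i) (b i)) -> r (interp A f a) (interp A f b))].
Arguments is_congruence {S} A r.

Record congruence (S : signature) (A : algebra S) := Congruence {
  crel :> A -> A -> Prop;
  crelP : is_congruence A crel }.

Lemma inter_cong (S : signature) (A : algebra S) (P : (A -> A -> Prop) -> Prop) :
  is_congruence A (fun x y => forall r, P r -> is_congruence A r -> r x y).
Proof.
split.
- by move=> x r _ [rf _ _ _].
- by move=> x y H r Pr cr; case: (cr) => _ rs _ _; apply: rs; apply: H.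
- move=> x y z H1 H2 r Pr cr; case: (cr) => _ _ rt _.
  by apply: (rt _ y); [apply: H1|apply: H2].
- move=> f a b H r Pr cr; case: (cr) => _ _ _ rc.
  by apply: rc => i; apply: H.
Qed.

Arguments inter_cong {S} A P.

Lemma eq_cong (S : signature) (A : algebra S) : is_congruence A (@eq A).
Proof.
split => //.
- by move=> x y z -> ->.
- by move=> f a b H; rewrite (functional_extensionality a b H).
Qed.

Lemma top_cong (S : signature) (A : algebra S) : is_congruence A (fun _ _ => True).
Proof. by split. Qed.

Lemma meet_cong (S : signature) (A : algebra S) (th ze : congruence A) :
  is_congruence A (fun x y => th x y /\ ze x y).
Proof.
case: th => th [t1 t2 t3 t4]; case: ze => ze [z1 z2 z3 z4]; split => /=.
- by move=> x; split.
- by move=> x y [] ? ?; split; auto.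
- by move=> x y z [] ? ? [] ? ?; split; [apply: (t3 _ y)|apply: (z3 _ y)].
- by move=> f a b H; split; [apply: t4|apply: z4] => i; case: (H i).
Qed.

Definition cbot (S : signature) (A : algebra S) : congruence A :=
  Congruence (eq_cong A).
Definition ctop (S : signature) (A : algebra S) : congruence A :=
  Congruence (top_cong A).
Definition cmeet (S : signature) (A : algebra S) (th ze : congruence A) :
  congruence A := Congruence (meet_cong th ze).
Definition cjoin (S : signature) (A : algebra S) (th ze : congruence A) :
  congruence A :=
  Congruence (inter_cong A (fun r => subrel th r /\ subrel ze r)).

(* The (term-condition) commutator; in congruence-modular varieties it *)
(* is the modular commutator.                                          *)

Definition sumval (T : Type) (m n : nat) (x : 'I_m -> T) (u : 'I_n -> T) :
  'I_m + 'I_n -> T :=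
  fun z => match z with inl i => x i | inr j => u j end.

Definition centralizes (S : signature) (A : algebra S)
    (al be de : A -> A -> Prop) :=
  forall (m n : nat) (t : term S ('I_m + 'I_n)) (x y : 'I_m -> A)
         (u v : 'I_n -> A),
    (forall i, al (x i) (y i)) -> (forall j, be (u j) (v j)) ->
    de (eval A (sumval x u) t) (eval A (sumval x v) t) ->
    de (eval A (sumval y u) t) (eval A (sumval y v) t).
Arguments centralizes {S} A al be de.

Definition commutator (S : signature) (A : algebra S) (al be : A -> A -> Prop) :
  A -> A -> Prop :=
  fun a b => forall de, is_congruence A de -> centralizes A al be de -> de a b.
Arguments commutator {S} A al be _ _.

Definition prime_cong (S : signature) (A : algebra S) (phi : congruence A) :=
  (exists x y : A, ~ phi x y) /\
  forall th ze : congruence A,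
    subrel (commutator A th ze) phi -> subrel th phi \/ subrel ze phi.

Definition rho (S : signature) (A : algebra S) (th : A -> A -> Prop) :
  A -> A -> Prop :=
  fun x y => forall phi : congruence A, prime_cong phi -> subrel th phi -> phi x y.
Arguments rho {S} A th _ _.

Definition semiprime (S : signature) (A : algebra S) :=
  releq (rho A (@eq A)) (@eq A).

Definition rad_equiv (S : signature) (A : algebra S) (th ze : congruence A) :=
  releq (rho A th) (rho A ze).

(* Bounded lattices presented as setoids (carrier + lattice equality); *)
(* this allows a uniform treatment of Con(A) and Con(A)/==_A.          *)

Unset Implicit Arguments.
Record slattice := SLattice {
  scar : Type;
  seqv : scar -> scar -> Prop;
  smeet : scar -> scar -> scar;
  sjoin : scar -> scar -> scar;
  sbot : scar;
  stop : scar }.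

Definition sle (L : slattice) (x y : scar L) := seqv L (smeet L x y) x.

Definition sl_complemented (L : slattice) (e : scar L) :=
  exists f, seqv L (smeet L e f) (sbot L) /\ seqv L (sjoin L e f) (stop L).

Definition in_Ann (L : slattice) (U : scar L -> Prop) (x : scar L) :=
  forall u, U u -> seqv L (smeet L x u) (sbot L).

(* |U| <= |K|, counting elements of L (i.e. seqv-classes) *)
Definition card_le (L : slattice) (U : scar L -> Prop) (K : Type) :=
  exists f : K -> scar L, forall u, U u -> exists k, seqv L u (f k).

(* condition (1)_{kappa, L}, kappa = |K| *)
Definition cond1 (K : Type) (L : slattice) :=
  forall U : scar L -> Prop, card_le L U K ->
    exists e, sl_complemented L e /\ forall x, in_Ann L U x <-> sle L x e.

Set Implicit Arguments.

Definition Con (S : signature) (A : algebra S) : slattice :=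
  @SLattice (congruence A) (fun th ze => releq th ze)
    (@cmeet S A) (@cjoin S A) (cbot A) (ctop A).

Definition ConQ (S : signature) (A : algebra S) : slattice :=
  @SLattice (congruence A) (@rad_equiv S A)
    (@cmeet S A) (@cjoin S A) (cbot A) (ctop A).

Definition identity (S : signature) := (term S nat * term S nat)%type.

Definition satisfies (S : signature) (E : identity S -> Prop) (A : algebra S) :=
  forall e, E e -> forall v : nat -> A, eval A v e.1 = eval A v e.2.

Definition modular_con (S : signature) (A : algebra S) :=
  forall al be ga : congruence A, subrel al ga ->
    subrel (cmeet (cjoin al be) ga) (cjoin al (cmeet be ga)).

Definition cong_modular_variety (S : signature) (E : identity S -> Prop) :=
  forall A : algebra S, satisfies E A -> modular_con A.

Definition semi_degenerate (S : signature) (E : identity S -> Prop) :=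
  forall A : algebra S, satisfies E A -> (exists x y : A, x <> y) ->
    ~ (exists a : A, forall (f : S) (args : 'I_(arity f) -> A),
          (forall i, args i = a) -> interp A f args = a).

(* Since A is semiprime and rho_A turns meets into intersections, th /\ ze
   is Delta_A iff it is ==_A-equivalent to Delta_A iff rho_A(th) and
   rho_A(ze) meet in Delta_A.  Hence an annihilator is the same set of
   congruences in Con(A) and in Con(A)/==_A, and it only depends on U up to
   ==_A; moreover x <= e holds modulo ==_A iff x <= rho_A(e).  So a generator
   e of an annihilator in Con(A) still generates it modulo ==_A.  Conversely,
   if e generates it modulo ==_A with complement f there, then rho_A(e)
   generates it in Con(A), with complement f: rho_A(e) /\ f = Delta_A as A is
   semiprime, and rho_A(e) \/ f = nabla_A because rho_A(th) = nabla_A forces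
   th = nabla_A.  That last fact holds since every proper congruence lies
   below a prime one: nabla_A is compact in a semi-degenerate variety, so by
   Zorn's lemma there is a maximal proper congruence above it, and maximal
   congruences are prime in semi-degenerate congruence-modular varieties. *)

From Stdlib Require Import FunctionalExtensionality PropExtensionality ProofIrrelevance.
From Stdlib Require Import ClassicalEpsilon Classical.
From mathcomp Require Import all_boot.
From mathcomp Require boolp classical_sets.

Set Implicit Arguments.
Unset Strict Implicit.
Unset Printing Implicit Defensive.

Section Congruences.
Variables (S : signature) (A : algebra S).
Implicit Types (r th ze : congruence A).

Lemma cong_refl r x : r x x.
Proof. by case: (crelP r) => h _ _ _; apply: h. Qed.

Lemma cong_sym r x y : r x y -> r y x.
Proof. by case: (crelP r) => _ h _ _; apply: h. Qed.

Lemma cong_trans r x y z : r x y -> r y z -> r x z.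
Proof. by case: (crelP r) => _ _ h _; apply: h. Qed.

Lemma cong_compat r f (a b : 'I_(arity f) -> A) :
  (forall i, r (a i) (b i)) -> r (interp A f a) (interp A f b).
Proof. by case: (crelP r) => _ _ _ h; apply: h. Qed.

Lemma eval_cong r X (v w : X -> A) t :
  (forall x, r (v x) (w x)) -> r (eval A v t) (eval A w t).
Proof.
move=> vw; elim: t => [x|f ts IH] /=; first exact: vw.
by apply: cong_compat => i; apply: IH.
Qed.

Lemma commutator_subl th ze : subrel (commutator A th ze) th.
Proof.
move=> a b; apply; first exact: crelP.
move=> m n t x y u v xy _ xu_xv.
have x_y w : th (eval A (sumval x w) t) (eval A (sumval y w) t).
  by apply: eval_cong => -[i|j] /=; [apply: xy | apply: cong_refl].
exact: cong_trans (cong_sym (x_y u)) (cong_trans xu_xv (x_y v)).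
Qed.

Lemma commutator_subr th ze : subrel (commutator A th ze) ze.
Proof.
move=> a b; apply; first exact: crelP.
move=> m n t x y u v _ uv _.
by apply: eval_cong => -[i|j] /=; [apply: cong_refl | apply: uv].
Qed.

Lemma rho_sub (th : A -> A -> Prop) : subrel th (rho A th).
Proof. by move=> x y xy phi _; apply. Qed.

Lemma rho_mono (th ze : A -> A -> Prop) :
  subrel th ze -> subrel (rho A th) (rho A ze).
Proof.
by move=> th_ze x y xy phi phi_prime ze_phi; apply: xy => // a b /th_ze/ze_phi.
Qed.

Lemma rho_idem (th : A -> A -> Prop) : subrel (rho A (rho A th)) (rho A th).
Proof. by move=> x y xy phi phi_prime th_phi; apply: xy => // a b; apply. Qed.

Lemma rho_is_cong (th : A -> A -> Prop) : is_congruence A (rho A th).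
Proof.
split.
- by move=> x phi _ _; apply: cong_refl.
- by move=> x y xy phi pp sub; apply/cong_sym/xy.
- by move=> x y z xy yz phi pp sub; apply: cong_trans (xy _ pp sub) (yz _ pp sub).
- by move=> f a b ab phi pp sub; apply: cong_compat => i; apply: ab.
Qed.

Definition rho_cong (th : A -> A -> Prop) : congruence A :=
  Congruence (rho_is_cong th).

Lemma rho_ctop x y : rho A (ctop A) x y.
Proof. by move=> phi [[a [b nab]] _] sub; case: nab; apply: sub. Qed.

(* Prime congruences are meet-prime because [th, ze] is below th /\ ze. *)
Lemma rho_cmeet th ze x y :
  rho A (cmeet th ze) x y <-> rho A th x y /\ rho A ze x y.
Proof.
split; first by move=> xy; split; apply: rho_mono xy => a b [].
move=> [th_xy ze_xy] phi phi_prime sub.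
have [th_phi|ze_phi] : subrel th phi \/ subrel ze phi.
  apply: (proj2 phi_prime) => a b ab; apply: sub.
  by split; [apply: commutator_subl ab | apply: commutator_subr ab].
- exact: th_xy phi_prime th_phi.
- exact: ze_xy phi_prime ze_phi.
Qed.

End Congruences.

Section RadicalQuotient.
Variables (S : signature) (A : algebra S).
Hypothesis A_semiprime : semiprime A.
Implicit Types (th ze x y e : congruence A) (U V : congruence A -> Prop).

Lemma releq_rad_equiv th ze : releq th ze -> rad_equiv th ze.
Proof. by move=> [th_ze ze_th]; split; apply: rho_mono. Qed.

Lemma rad_equiv_cbot th : rad_equiv th (cbot A) <-> releq th (cbot A).
Proof.
split; last exact: releq_rad_equiv.
move=> [th_0 _]; split => [a b /rho_sub/th_0|a b /= ->]; last exact: cong_refl.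
exact: (proj1 A_semiprime).
Qed.

Lemma rad_equiv_cmeet_cbot th ze :
  rad_equiv (cmeet th ze) (cbot A) <->
  forall a b, rho A th a b -> rho A ze a b -> a = b.
Proof.
split=> [[meet_0 _] a b th_ab ze_ab | disj].
  by apply: (proj1 A_semiprime); apply/meet_0/rho_cmeet.
split=> [a b /rho_cmeet [th_ab ze_ab]|]; first by apply/rho_sub/disj.
by apply: rho_mono => a b /= ->; split; apply: cong_refl.
Qed.

Lemma in_Ann_Con_ConQ U x : in_Ann (Con A) U x <-> in_Ann (ConQ A) U x.
Proof.
split=> ann u /ann; first exact: (rad_equiv_cbot (cmeet x u)).2.
exact: (rad_equiv_cbot (cmeet x u)).1.
Qed.

Lemma in_Ann_ConQ_rho U V x y :
  subrel (rho A y) (rho A x) ->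
  (forall v, V v -> exists2 u, U u & subrel (rho A v) (rho A u)) ->
  in_Ann (ConQ A) U x -> in_Ann (ConQ A) V y.
Proof.
move=> yx VU ann v /VU [u /ann /rad_equiv_cmeet_cbot disj vu].
by apply/rad_equiv_cmeet_cbot => a b /yx ? /vu; apply: disj.
Qed.

Lemma sle_ConP x e : sle (Con A) x e <-> subrel x e.
Proof.
split=> [[_ x_xe] a b /x_xe [] //|x_e].
by split=> [a b []|a b ab] //; split=> //; apply: x_e.
Qed.

Lemma sle_ConQP x e : sle (ConQ A) x e <-> subrel x (rho A e).
Proof.
split=> [[_ x_xe] a b /rho_sub/x_xe/rho_cmeet [] //|x_e].
split; first by apply: rho_mono => a b [].
by move=> a b ab; apply/rho_cmeet; split=> //; apply: rho_idem; apply: rho_mono ab.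
Qed.

Lemma cond1_Con_ConQ (K : Type) : cond1 K (Con A) -> cond1 K (ConQ A).
Proof.
move=> hCon U [f Uf].
pose V th := exists k, th = f k /\ exists2 u, U u & rad_equiv u (f k).
have [|e [[g [eg0 eg1]] AnnV]] := hCon V.
  by exists f => _ [k [-> _]]; exists k; split.
have AnnUV x : in_Ann (ConQ A) U x <-> in_Ann (Con A) V x.
  rewrite in_Ann_Con_ConQ; split; apply: in_Ann_ConQ_rho => //.
  - by move=> v [k [-> [u Uu [_ ku]]]]; exists u.
  - move=> u Uu; have [k uk] := Uf u Uu.
    by exists (f k); [exists k; split=> //; exists u | case: uk].
have AnnV_e : in_Ann (ConQ A) V e by apply/in_Ann_Con_ConQ/AnnV/sle_ConP.
exists e; split; first by exists g; split; apply: releq_rad_equiv.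
move=> x; rewrite AnnUV AnnV sle_ConP sle_ConQP; split.
  by move=> xe a b /xe; apply: rho_sub.
move=> xe; apply/sle_ConP/AnnV/in_Ann_Con_ConQ.
apply: in_Ann_ConQ_rho AnnV_e; last by move=> v Vv; exists v.
by move=> a b /(rho_mono xe); apply: rho_idem.
Qed.

Hypothesis A_rho_full :
  forall th, (forall a b, rho A th a b) -> forall a b, th a b.

Lemma cond1_ConQ_Con (K : Type) : cond1 K (ConQ A) -> cond1 K (Con A).
Proof.
move=> hQ U [f Uf].
have [|e [[g [eg0 eg1]] AnnU]] := hQ U.
  by exists f => u /Uf [k uk]; exists k; apply: releq_rad_equiv.
exists (rho_cong e); split.
  exists g; split.
  - split=> [a b [e_ab g_ab]|a b ->]; last exact: (cong_refl (cmeet _ _)).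
    by move/rad_equiv_cmeet_cbot: eg0; apply=> //; apply: rho_sub.
  - split=> // a b _; apply: A_rho_full => c d.
    have := proj2 eg1 c d (rho_ctop c d).
    apply: rho_mono => p q pq r [e_r g_r] r_cong.
    by apply: pq r_cong; split=> // u v uv; apply/e_r/rho_sub.
by move=> x; rewrite (in_Ann_Con_ConQ U x) AnnU sle_ConP sle_ConQP.
Qed.

End RadicalQuotient.

Lemma sval_inj (T : Type) (P : T -> Prop) (p q : {x : T | P x}) :
  sval p = sval q -> p = q.
Proof. by apply: eq_sig_hprop => x; apply: proof_irrelevance. Qed.

Section Constructions.
Variable S : signature.

Fixpoint tsubst X Y (s : X -> term S Y) (t : term S X) : term S Y :=
  match t with
  | Var x => s x
  | App f ts => App f (fun i => tsubst s (ts i))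
  end.

Lemma eval_tsubst (B : algebra S) X Y (s : X -> term S Y) (w : Y -> B) t :
  eval B w (tsubst s t) = eval B (fun x => eval B w (s x)) t.
Proof.
elim: t => [x|f ts IH] //=; congr (interp B f).
by apply: functional_extensionality => i; apply: IH.
Qed.

Definition hom (B C : algebra S) (h : B -> C) :=
  forall f (a : 'I_(arity f) -> B), h (interp B f a) = interp C f (fun i => h (a i)).

Lemma preimage_is_cong (B C : algebra S) (h : B -> C) (r : congruence C) :
  hom h -> is_congruence B (fun x y => r (h x) (h y)).
Proof.
move=> h_hom; split.
- by move=> x; apply: cong_refl.
- by move=> x y; apply: cong_sym.
- by move=> x y z; apply: cong_trans.
- by move=> f a b ab; rewrite !h_hom; apply: cong_compat.
Qed.

Definition preimage_cong (B C : algebra S) (h : B -> C) (h_hom : hom h)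
  (r : congruence C) : congruence B := Congruence (preimage_is_cong r h_hom).

Section PairAlgebra.
Variables (A : algebra S) (be : congruence A).

Definition pair_interp f (args : 'I_(arity f) -> {p : A * A | be p.1 p.2}) :
    {p : A * A | be p.1 p.2} :=
  exist _ (interp A f (fun i => (sval (args i)).1),
           interp A f (fun i => (sval (args i)).2))
        (cong_compat (fun i => svalP (args i))).

Definition Apair : algebra S := @Algebra S {p : A * A | be p.1 p.2} pair_interp.

Definition pfst (p : Apair) : A := (sval p).1.
Definition psnd (p : Apair) : A := (sval p).2.

Lemma pfst_hom : hom pfst. Proof. by []. Qed.
Lemma psnd_hom : hom psnd. Proof. by []. Qed.

Lemma eval_Apair X (v : X -> Apair) t :
  sval (eval Apair v t) = (eval A (pfst \o v) t, eval A (psnd \o v) t).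
Proof.
elim: t => [x|f ts IH] /=; first exact: surjective_pairing.
by congr pair; congr (interp A f); apply: functional_extensionality => i;
  rewrite /pfst IH.
Qed.

Lemma Apair_sat E : satisfies E A -> satisfies E Apair.
Proof. by move=> hA e he v; apply: sval_inj; rewrite !eval_Apair !hA. Qed.

Definition diag (x : A) : Apair := exist _ (x, x) (cong_refl be x).

Lemma diag_hom : hom diag.
Proof. by move=> f a; apply: sval_inj. Qed.

End PairAlgebra.

Section Quotient.
Variables (B : algebra S) (r : congruence B).

Definition qcar := {P : B -> Prop | exists b, P = r b}.
Definition cls (b : B) : qcar := exist _ (r b) (ex_intro _ b erefl).
Definition repr (q : qcar) : B :=
  sval (constructive_indefinite_description _ (svalP q)).

Lemma reprK : cancel repr cls.
Proof.
move=> q; apply: sval_inj; rewrite /repr /=.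
by case: (constructive_indefinite_description _ _) => b /= ->.
Qed.

Lemma cls_eq a b : cls a = cls b <-> r a b.
Proof.
split=> [ab|ab].
  by have : r b b := cong_refl r b; rewrite -[r b]/(sval (cls b)) -ab.
apply: sval_inj; apply: functional_extensionality => x /=.
apply: propositional_extensionality.
by split; apply: cong_trans; [apply: cong_sym|].
Qed.

Lemma repr_cls b : r (repr (cls b)) b.
Proof. by apply/cls_eq; rewrite reprK. Qed.

Definition Aquot : algebra S :=
  @Algebra S qcar (fun f args => cls (interp B f (fun i => repr (args i)))).

Lemma eval_Aquot X (v : X -> B) t :
  eval Aquot (fun x => cls (v x)) t = cls (eval B v t).
Proof.
elim: t => [x|f ts IH] //=; apply/cls_eq.
by apply: cong_compat => i; rewrite IH; apply: repr_cls.
Qed.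

Lemma Aquot_sat E : satisfies E B -> satisfies E Aquot.
Proof.
move=> hB e he v.
have -> : v = (fun x => cls (repr (v x))).
  by apply: functional_extensionality => x; rewrite reprK.
by rewrite !eval_Aquot hB.
Qed.

End Quotient.

Section Power.
Variables (B : algebra S) (J : Type).

Definition Apow : algebra S :=
  @Algebra S (J -> B) (fun f args j => interp B f (fun i => args i j)).

Lemma eval_Apow X (v : X -> Apow) t j : eval Apow v t j = eval B (fun x => v x j) t.
Proof.
elim: t => [x|f ts IH] //=; congr (interp B f).
by apply: functional_extensionality => i.
Qed.

Lemma Apow_sat E : satisfies E B -> satisfies E Apow.
Proof.
by move=> hB e he v; apply: functional_extensionality => j; rewrite !eval_Apow hB.
Qed.

End Power.

End Constructions.

Arguments pfst {S A be} p.
Arguments psnd {S A be} p.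
Arguments pfst_hom {S A be}.
Arguments psnd_hom {S A be}.

(* Otherwise B / r would be a nontrivial member of E with a one-element
   subalgebra. *)
Lemma semi_degenerate_cong_full (S : signature) (E : identity S -> Prop)
    (B : algebra S) (r : congruence B) (a : B) :
  semi_degenerate E -> satisfies E B ->
  (forall f, r (interp B f (fun _ => a)) a) -> forall x y, r x y.
Proof.
move=> hSD hB ra x y; apply: NNPP => nxy.
apply: (hSD _ (Aquot_sat (r := r) hB)).
  by exists (cls r x), (cls r y) => /cls_eq.
exists (cls r a) => f args args_a; apply/cls_eq.
apply: cong_trans (ra f); apply: cong_compat => i.
by rewrite args_a; apply: repr_cls.
Qed.

Section Saturation.
Variables (S : signature) (B : algebra S) (P : B -> Prop).

(* p and q are related iff no unary polynomial separates them w.r.t. P; the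
   distinguished variable of a polynomial is [inl ord0], its parameters are
   the [inr j]. *)
Definition sat_rel (p q : B) : Prop :=
  forall n (t : term S ('I_1 + 'I_n)) (v : 'I_n -> B),
    P (eval B (sumval (fun=> p) v) t) <-> P (eval B (sumval (fun=> q) v) t).

Lemma sat_rel_update f (a b : 'I_(arity f) -> B) (k : 'I_(arity f)) :
  sat_rel (a k) (b k) -> (forall i, i != k -> a i = b i) ->
  sat_rel (interp B f a) (interp B f b).
Proof.
move=> ab_k ab n t v.
pose upd z i := if i == k then z else a i.
have upd_a : a = upd (a k).
  by apply: functional_extensionality => i; rewrite /upd; case: eqP => [->|].
have upd_b : b = upd (b k).
  by apply: functional_extensionality => i; rewrite /upd; case: eqP => [->|/eqP /ab].
pose s (o : 'I_1 + 'I_n) : term S ('I_1 + 'I_(n + arity f)) :=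
  if o is inr j then Var (inr (lshift (arity f) j))
  else App f (fun i => if i == k then Var (inl ord0) else Var (inr (rshift n i))).
pose w (j : 'I_(n + arity f)) : B :=
  match split j with inl j' => v j' | inr i => a i end.
have ws z : (fun o => eval B (sumval (fun=> z) w) (s o)) =
            sumval (fun=> interp B f (upd z)) v.
  apply: functional_extensionality => -[o|j] /=; last first.
    by rewrite /w (unsplitK (inl j)).
  congr (interp B f); apply: functional_extensionality => i.
  by rewrite /upd; case: (i == k) => //=; rewrite /w (unsplitK (inr i)).
by have := ab_k _ (tsubst s t) w; rewrite !eval_tsubst !ws -upd_a -upd_b.
Qed.

Lemma sat_rel_compat f (a b : 'I_(arity f) -> B) :
  (forall i, sat_rel (a i) (b i)) -> sat_rel (interp B f a) (interp B f b).
Proof.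
move=> ab.
pose mix m (i : 'I_(arity f)) := if i < m then b i else a i.
suff mixP m : m <= arity f -> sat_rel (interp B f a) (interp B f (mix m)).
  have -> : b = mix (arity f).
    by apply: functional_extensionality => i; rewrite /mix ltn_ord.
  exact: mixP.
elim: m => [|m IH] m_le n t v.
  by have -> : mix 0 = a by apply: functional_extensionality.
rewrite (IH (ltnW m_le)).
pose k := Ordinal m_le.
apply: (sat_rel_update (k := k)); first by rewrite /mix /= ltnn ltnSn.
by move=> i ik; rewrite /mix ltnS [i <= m]leq_eqVlt -[m]/(val k) val_eqE (negbTE ik).
Qed.

Lemma sat_rel_is_cong : is_congruence B sat_rel.
Proof.
split.
- by move=> x n t v.
- by move=> x y xy n t v; rewrite xy.
- by move=> x y z xy yz n t v; rewrite xy yz.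
- exact: sat_rel_compat.
Qed.

Definition sat_cong : congruence B := Congruence sat_rel_is_cong.

Lemma sat_congP p q : sat_cong p q -> P p -> P q.
Proof. by move=> pq; have [] := pq 0 (Var (inl ord0)) (fun=> p). Qed.

Lemma sat_cong_max (r : congruence B) :
  (forall p q, r p q -> P p -> P q) -> subrel r sat_cong.
Proof.
move=> r_sat p q pq n t v.
have rpq z z' :
    r z z' -> r (eval B (sumval (fun=> z) v) t) (eval B (sumval (fun=> z') v) t).
  by move=> zz'; apply: eval_cong => -[|j] //=; apply: cong_refl.
by split; apply: r_sat; apply: rpq; [|apply: cong_sym].
Qed.

End Saturation.

Lemma shifting (S : signature) (B : algebra S) (al be ga : congruence B) :
  modular_con B -> subrel (cmeet al be) ga ->
  forall x y u v, al x y -> al u v -> be x u -> be y v -> ga u v -> ga x y.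
Proof.
move=> B_mod albe_ga x y u v xy uv xu yv uv_ga.
have xy_join : cjoin (cmeet ga al) be x y.
  move=> r [ga_r be_r] r_cong; pose rc := Congruence r_cong.
  apply: (cong_trans (r := rc) (be_r _ _ xu)).
  apply: (cong_trans (r := rc) (ga_r u v (conj uv_ga uv))).
  exact: (cong_sym (r := rc) (be_r _ _ yv)).
have := B_mod (cmeet ga al) be al (fun _ _ => @proj2 _ _) x y (conj xy_join xy).
apply=> [|]; last exact: crelP.
by split=> [a b []|a b [? ?]] //; apply: albe_ga.
Qed.

Section DiagonalCongruence.
Variables (S : signature) (A : algebra S) (al be : congruence A).
Hypothesis Apair_modular : modular_con (Apair be).

Notation B := (Apair be).
Notation dg := (@diag S A be).

(* Delta_{al,be} of Freese and McKenzie. *)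
Definition Delta : congruence B :=
  Congruence (inter_cong B (fun r => forall x y, al x y -> r (dg x) (dg y))).

Lemma Delta_diag x y : al x y -> Delta (dg x) (dg y).
Proof. by move=> xy r r_al _; apply: r_al. Qed.

Lemma Delta_min (r : congruence B) :
  (forall x y, al x y -> r (dg x) (dg y)) -> subrel Delta r.
Proof. by move=> r_al p q; apply; last exact: crelP. Qed.

Definition pair_rel (de : A -> A -> Prop) (p : B) : Prop := de (pfst p) (psnd p).

Lemma centralizes_sat_rel (de : A -> A -> Prop) x y :
  centralizes A al be de -> al x y -> sat_rel (pair_rel de) (dg x) (dg y).
Proof.
move=> C xy n t v.
have pair_eval z : pair_rel de (eval B (sumval (fun=> dg z) v) t) =
    de (eval A (sumval (fun=> z) (pfst \o v)) t)
       (eval A (sumval (fun=> z) (psnd \o v)) t).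
  rewrite /pair_rel {1}/pfst {1}/psnd eval_Apair /=.
  by congr (de (eval A _ t) (eval A _ t)); apply: functional_extensionality => -[].
have v_be j : be (pfst (v j)) (psnd (v j)) := svalP (v j).
rewrite !pair_eval; split.
- exact: (C _ _ t (fun=> x) (fun=> y)).
- exact: (C _ _ t (fun=> y) (fun=> x) _ _ (fun=> cong_sym xy)).
Qed.

Lemma Delta_commutator b d (bd : be b d) :
  Delta (dg b) (exist _ (b, d) bd) -> commutator A al be b d.
Proof.
move=> bd_Delta de de_cong C.
have /sat_congP := Delta_min (r := sat_cong (pair_rel de))
                               (fun x y => centralizes_sat_rel C) bd_Delta.
by apply; case: de_cong => de_refl _ _ _; apply: de_refl.
Qed.

Let ker_fst : congruence B := preimage_cong pfst_hom (cbot A).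
Let ker_snd : congruence B := preimage_cong psnd_hom (cbot A).

Lemma ker_fst_snd : subrel (cmeet ker_fst ker_snd) (@eq B).
Proof.
move=> [[p1 p2] ?] [[q1 q2] ?] [/= pq1 pq2]; apply: sval_inj.
by rewrite /pfst /psnd /= in pq1 pq2 *; rewrite pq1 pq2.
Qed.

Lemma Delta_fiber_commutator p q :
  pfst p = pfst q -> Delta p q -> commutator A al be (psnd p) (psnd q).
Proof.
move=> pq1 pq_Delta.
have pq2 : be (psnd p) (psnd q).
  have p_be : be (pfst p) (psnd p) := svalP p.
  have q_be : be (pfst q) (psnd q) := svalP q.
  by rewrite -pq1 in q_be; apply: cong_trans (cong_sym p_be) q_be.
apply: (Delta_commutator (bd := pq2)).
apply: (shifting (al := ker_fst) (be := ker_snd)) pq_Delta => //.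
by move=> p' q' /ker_fst_snd ->; apply: cong_refl.
Qed.

Lemma Delta_saturates (mu : congruence A) :
  subrel (commutator A al be) mu ->
  forall p q, Delta p q -> pair_rel mu p -> pair_rel mu q.
Proof.
move=> comm_mu p q pq_Delta p_mu.
have qp1 : al (pfst q) (pfst p).
  apply: cong_sym.
  exact: (Delta_min (r := preimage_cong pfst_hom al) (fun x y xy => xy) pq_Delta).
have := shifting (al := ker_fst) (be := Delta) (ga := preimage_cong psnd_hom mu)
          Apair_modular _ (x := dg (pfst q)) (y := q) (u := dg (pfst p)) (v := p).
apply=> //.
- by move=> p' q' [pq1 pq']; apply: comm_mu; apply: Delta_fiber_commutator.
- exact: Delta_diag.
- exact: cong_sym.
Qed.

(* Modulo the largest congruence of A(be) saturating the pairs lying in mu,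
   the diagonal collapses to a point while <c, d> with c be d but not c mu d
   stays apart. *)
Lemma comaximal_commutator_sub (E : identity S -> Prop) (mu : congruence A) :
  semi_degenerate E -> satisfies E B ->
  subrel (commutator A al be) mu -> (forall x y, cjoin al mu x y) -> subrel be mu.
Proof.
move=> hSD hB comm_mu al_mu c d cd; apply: NNPP => ncd.
pose Th := sat_cong (pair_rel mu).
have Delta_Th : subrel Delta Th := sat_cong_max (Delta_saturates comm_mu).
have mu_Th x y : mu x y -> Th (dg x) (dg y).
  move=> xy; apply: (sat_cong_max (r := cmeet (preimage_cong pfst_hom mu)
                                             (preimage_cong psnd_hom mu))) => //.
  move=> p q [/= pq1 pq2] p_mu; rewrite /pair_rel in p_mu *.
  exact: cong_trans (cong_sym pq1) (cong_trans p_mu pq2).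
have diag_Th x y : Th (dg x) (dg y).
  apply: (al_mu x y (fun x y => Th (dg x) (dg y))).
    by split=> [u v /Delta_diag/Delta_Th|]; last exact: mu_Th.
  exact: preimage_is_cong Th (diag_hom be).
have Th_full := semi_degenerate_cong_full hSD hB (r := Th) (a := dg c).
have /sat_congP : Th (dg c) (exist _ (c, d) cd).
  by apply: Th_full => f; rewrite -diag_hom; apply: diag_Th.
by move=> /(_ (cong_refl mu c)).
Qed.

End DiagonalCongruence.

Definition proper (S : signature) (A : algebra S) (r : A -> A -> Prop) :=
  exists x y, ~ r x y.

Section PrimeCongruences.
Variables (S : signature) (E : identity S -> Prop).
Hypothesis E_modular : cong_modular_variety E.
Hypothesis E_semi_degenerate : semi_degenerate E.
Variables (A : algebra S).
Hypothesis A_in_E : satisfies E A.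

Lemma maximal_prime (mu : congruence A) : proper mu ->
  (forall r : congruence A, subrel mu r -> proper r -> subrel r mu) ->
  prime_cong mu.
Proof.
move=> mu_proper mu_max; split=> // al be comm_mu.
have [|al_mu] := classic (subrel al mu); [by left | right].
have Apair_in_E := Apair_sat (be := be) A_in_E.
have Apair_modular : modular_con (Apair be) by apply: E_modular.
apply: (comaximal_commutator_sub Apair_modular E_semi_degenerate Apair_in_E comm_mu).
move=> x y; apply: NNPP => nxy; apply: al_mu => a b ab.
apply: (mu_max (cjoin al mu)).
- by move=> c d cd r [_ mu_r] _; apply: mu_r.
- by exists x, y.
- by move=> r [al_r _] _; apply: al_r.
Qed.

Section ChainUnion.
Variables (I : Type) (c : I -> congruence A) (i0 : I).
Hypothesis c_chain : forall i j, subrel (c i) (c j) \/ subrel (c j) (c i).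
Hypothesis c_proper : forall i, proper (c i).

Lemma chain_ub n (g : 'I_n -> I) : exists j, forall k, subrel (c (g k)) (c j).
Proof.
elim: n g => [|n IH] g; first by exists i0 => -[].
have [j gj] := IH (fun k => g (lift ord0 k)).
have [g0j|jg0] := c_chain (g ord0) j.
- by exists j => k; case: (unliftP ord0 k) => [k' ->|->].
- exists (g ord0) => k; case: (unliftP ord0 k) => [k' ->|->] // x y /gj; exact: jg0.
Qed.

Definition chain_union (x y : A) := exists i, c i x y.

Lemma chain_union_is_cong : is_congruence A chain_union.
Proof.
split.
- by move=> x; exists i0; apply: cong_refl.
- by move=> x y [i xy]; exists i; apply: cong_sym.
- move=> x y z [i xy] [j yz]; have [ij|ji] := c_chain i j.
  + by exists j; apply: cong_trans (ij _ _ xy) yz.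
  + by exists i; apply: cong_trans xy (ji _ _ yz).
- move=> f a b ab; have [g abg] := fin_all_exists ab.
  have [j gj] := chain_ub g; exists j; apply: cong_compat => k.
  exact: gj (abg k).
Qed.

Definition eventually (p q : Apow A I) :=
  exists i, forall j, subrel (c i) (c j) -> c j (p j) (q j).

Lemma eventually_is_cong : is_congruence (Apow A I) eventually.
Proof.
split.
- by move=> p; exists i0 => j _; apply: cong_refl.
- by move=> p q [i pq]; exists i => j ij; apply/cong_sym/pq.
- move=> p q r [i pq] [i' qr]; have [ii'|i'i] := c_chain i i'.
  + exists i' => j i'j; apply: cong_trans (pq _ _) (qr _ i'j).
    by move=> x y /ii' /i'j.
  + exists i => j ij; apply: cong_trans (pq _ ij) (qr _ _).
    by move=> x y /i'i /ij.
- move=> f a b ab; have [g abg] := fin_all_exists ab.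
  have [i gi] := chain_ub g; exists i => j ij.
  by apply: cong_compat => k; apply: abg => x y /gi /ij.
Qed.

(* If the union were total, the reduced power A^I / eventually would be a
   nontrivial algebra of E in which the class of a constant is a one-element
   subalgebra. *)
Lemma chain_union_proper : proper chain_union.
Proof.
apply: NNPP => not_proper.
have full x y : chain_union x y by apply: NNPP => nxy; apply: not_proper; exists x, y.
have [bx hbx] := boolp.choice c_proper.
have [by_ hby] := boolp.choice hbx.
have [a _] := c_proper i0.
have ev_full := semi_degenerate_cong_full E_semi_degenerate
  (Apow_sat (J := I) A_in_E) (r := Congruence eventually_is_cong) (a := fun=> a).
have [i /(_ i (fun _ _ => id))] : eventually bx by_.
  apply: ev_full => f.
  have [i fa] := full (interp A f (fun=> a)) a.
  by exists i => j ij; apply: ij.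
exact: hby.
Qed.

End ChainUnion.

Lemma exists_prime_above (th : congruence A) : proper th ->
  exists2 phi : congruence A, prime_cong phi & subrel th phi.
Proof.
move=> th_proper.
pose T := {r : congruence A | subrel th r /\ proper r}.
pose R (s t : T) := boolp.asbool (subrel (sval s) (sval t)).
have RP s t : R s t <-> subrel (sval s) (sval t) by split=> /boolp.asboolP.
pose t0 : T := exist _ th (conj (fun _ _ => id) th_proper).
have [|||m m_max] := @classical_sets.ZL_preorder T t0 R.
- by move=> s; apply/RP.
- by move=> r s t /RP rs /RP st; apply/RP => x y /rs /st.
- move=> Ch Ch_chain.
  have [[s0 Ch_s0]|Ch0] := classic (exists s, Ch s); last first.
    by exists t0 => s Ch_s; case: Ch0; exists s.
  pose c (i : {s | Ch s}) := sval (sval i).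
  have c_chain i j : subrel (c i) (c j) \/ subrel (c j) (c i).
    by case: (Ch_chain _ _ (svalP i) (svalP j)) => /RP; [left|right].
  have c_proper i : proper (c i) := proj2 (svalP (sval i)).
  pose i0 : {s | Ch s} := exist _ s0 Ch_s0.
  pose U := Congruence (chain_union_is_cong i0 c_chain).
  have th_U : subrel th U by move=> x y xy; exists i0; apply: (proj1 (svalP s0)).
  exists (exist _ U (conj th_U (chain_union_proper i0 c_chain c_proper))).
  by move=> s Ch_s; apply/RP => x y xy; exists (exist _ s Ch_s).
- exists (sval m); last exact: proj1 (svalP m).
  apply: maximal_prime; first exact: proj2 (svalP m).
  move=> r mr r_proper.
  have th_r : subrel th r by move=> x y /(proj1 (svalP m)) /mr.
  by apply/(RP (exist _ r (conj th_r r_proper)) m)/m_max/RP.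
Qed.

Lemma rho_full (th : congruence A) :
  (forall a b, rho A th a b) -> forall a b, th a b.
Proof.
move=> rho_th a b; apply: NNPP => nab.
have [phi phi_prime th_phi] := exists_prime_above (ex_intro _ a (ex_intro _ b nab)).
have [[x [y nxy]] _] := phi_prime.
exact: nxy (rho_th x y phi phi_prime th_phi).
Qed.

End PrimeCongruences.

Theorem proposition2p14 (S : signature) (E : identity S -> Prop)
    (A : algebra S) (K : Type) :
  cong_modular_variety E -> semi_degenerate E -> satisfies E A ->
  semiprime A -> inhabited K ->
  (cond1 K (Con A) <-> cond1 K (ConQ A)).
Proof.
(* The argument works for every K, the empty one included. *)
move=> E_modular E_semi_degenerate A_in_E A_semiprime _.
split; first exact: cond1_Con_ConQ.
apply: cond1_ConQ_Con => //.
exact: (@rho_full S E E_modular E_semi_degenerate A A_in_E).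
Qed.
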